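(* There is an absolute constant $C$ such that the following holds. If $G=(U,V,E)$ is a path-restricted ordered bipartite graph in which every forward path has length (number of edges) at most $k$, then $|E|\le C\,k\,(|U|+|V|)$, i.e. $G$ has $O(k(|U|+|V|))$ edges.
   Context: An ordered bipartite graph is $G=(U,V,E)$ where $U,V$ are disjoint finite sets, each carrying a strict total order (both written $<$), and $E\subseteq U\times V$. A path is a sequence of edges in which consecutive edges share a vertex. A path visiting the vertices of $U$ in the order $u_1,\dots,u_k$ and those of $V$ in the order $v_1,\dots,v_l$ is a forward path if either $u_1<\dots<u_k$ and $v_1<\dots<v_l$, or $u_1>\dots>u_k$ and $v_1>\dots>v_l$. For $x\le y$ in $U$ write $\langle x,y\rangle=\{u\in U: x\le u\le y\}$, and similarly in $V$. If $u_a<u_b$ are the smallest and largest $U$-vertices and $v_c<v_d$ the smallest and largest $V$-vertices of a forward path $P$, the range of $P$ is $\{\langle u_a,u_b\rangle,\langle v_c,v_d\rangle\}$. A vertex of $P$ is non-terminal if it is adjacent along $P$ to two vertices of $P$. An edge is a back edge to $P$ if either it is $(u_a,v_j)$ with $v_j\in\langle v_c,v_d\rangle$ and $v_j>v'$ for some non-terminal vertex $v'\in V$ of $P$, or it is $(u_i,v_c)$ with $u_i\in\langle u_a,u_b\rangle$ and $u_i>u'$ for some non-terminal vertex $u'\in U$ of $P$. $G$ is a path-restricted ordered bipartite graph (PRBG) if no forward path in $G$ has a back edge in $E$. *)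

From mathcomp Require Import all_boot.
Set Implicit Arguments. Unset Strict Implicit. Unset Printing Implicit Defensive.

(* An ordered bipartite graph with |U| = m, |V| = n is modelled with
   U = 'I_m and V = 'I_n (natural order), and edge set E : {set 'I_m * 'I_n}.
   Vertices of the graph are elements of 'I_m + 'I_n (inl = U, inr = V). *)

Section OBG.
Variables (m n : nat).
Implicit Types (E : {set 'I_m * 'I_n}) (p : seq ('I_m + 'I_n)).

Definition adjb E (x y : 'I_m + 'I_n) : bool :=
  match x, y with
  | inl u, inr v => (u, v) \in E
  | inr v, inl u => (u, v) \in E
  | _, _ => false
  end.

Definition is_path E p : bool :=
  [&& 1 < size p, uniq p &
      (if p is x :: s then path (adjb E) x s else false)].

Definition plength p : nat := (size p).-1.

Definition getU (x : 'I_m + 'I_n) : option 'I_m :=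
  if x is inl u then Some u else None.
Definition getV (x : 'I_m + 'I_n) : option 'I_n :=
  if x is inr v then Some v else None.

Definition Uverts p : seq 'I_m := pmap getU p.
Definition Vverts p : seq 'I_n := pmap getV p.

Definition forward p : bool :=
  (sorted (fun a b : 'I_m => a < b) (Uverts p) &&
   sorted (fun a b : 'I_n => a < b) (Vverts p)) ||
  (sorted (fun a b : 'I_m => b < a) (Uverts p) &&
   sorted (fun a b : 'I_n => b < a) (Vverts p)).

(* non-terminal vertices: those at positions 1 .. size p - 2 *)
Definition interior p : seq ('I_m + 'I_n) := take (size p).-2 (behead p).
Definition ntU p : seq 'I_m := pmap getU (interior p).
Definition ntV p : seq 'I_n := pmap getV (interior p).

Definition is_minU p (u : 'I_m) : bool :=
  (u \in Uverts p) && all (fun w : 'I_m => u <= w) (Uverts p).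
Definition is_minV p (v : 'I_n) : bool :=
  (v \in Vverts p) && all (fun w : 'I_n => v <= w) (Vverts p).

Definition in_rangeU p (u : 'I_m) : bool :=
  has (fun w : 'I_m => w <= u) (Uverts p) && has (fun w : 'I_m => u <= w) (Uverts p).
Definition in_rangeV p (v : 'I_n) : bool :=
  has (fun w : 'I_n => w <= v) (Vverts p) && has (fun w : 'I_n => v <= w) (Vverts p).

Definition back_edge p (e : 'I_m * 'I_n) : bool :=
  [&& is_minU p e.1, in_rangeV p e.2 & has (fun v' : 'I_n => v' < e.2) (ntV p)] ||
  [&& is_minV p e.2, in_rangeU p e.1 & has (fun u' : 'I_m => u' < e.1) (ntU p)].

Definition PRBG E : Prop :=
  forall p, is_path E p -> forward p ->
    forall e, e \in E -> ~~ back_edge p e.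

End OBG.

From mathcomp Require Import all_boot.
From mathcomp Require Import zify.
Set Implicit Arguments. Unset Strict Implicit. Unset Printing Implicit Defensive.

(* Call an edge (u,v) a
   first edge if v is the smallest neighbour of u, or u the smallest neighbour
   of v, and likewise for "largest"; there are at most 2(|U| + |V|) of them.
   Every increasing (resp. decreasing) path avoiding them can be extended at
   its first vertex by an edge to a smaller (resp. larger) neighbour, so
   removing them decreases the maximal length of a forward path.  Induction
   on k gives |E| <= 2 k (|U| + |V|). *)

Section FiberMinima.
Variables (T K : finType) (A : {set T}) (f : T -> K) (r : rel T).

Definition fiber_minima : {set T} :=
  [set e in A | [forall e' in A, (f e' == f e) ==> ~~ r e' e]].

Lemma card_fiber_minima :
  {in A &, forall e e', f e = f e' -> e != e' -> r e e' || r e' e} ->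
  #|fiber_minima| <= #|K|.
Proof.
move=> r_total; have f_inj : {in fiber_minima &, injective f}.
  move=> e e'; rewrite !inE => /andP[Ae /forall_inP min_e].
  move=> /andP[Ae' /forall_inP min_e'] fee'.
  apply/eqP; apply: contraT => /(r_total _ _ Ae Ae' fee') /orP[ree' | re'e].
    by move: (min_e' _ Ae); rewrite fee' eqxx ree'.
  by move: (min_e _ Ae'); rewrite fee' eqxx re'e.
by rewrite -(card_in_imset f_inj) max_card.
Qed.

Lemma fiber_minimaPn e :
  e \in A -> e \notin fiber_minima -> exists2 e', e' \in A & (f e' == f e) && r e' e.
Proof.
move=> Ae; rewrite inE Ae => /forall_inPn[e' Ae' not_min].
by exists e' => //; move: not_min; rewrite negb_imply negbK.
Qed.

End FiberMinima.

Section Paths.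
Variables m n : nat.
Implicit Types (E : {set 'I_m * 'I_n}) (p : seq ('I_m + 'I_n)).

Lemma mem_Uverts p u : (u \in Uverts p) = (inl u \in p).
Proof. by apply: can2_mem_pmap => // -[]. Qed.

Lemma mem_Vverts p v : (v \in Vverts p) = (inr v \in p).
Proof. by apply: can2_mem_pmap => // -[]. Qed.

Lemma is_path_subset E E' p : E' \subset E -> is_path E' p -> is_path E p.
Proof.
move=> sub; rewrite /is_path => /and3P[-> -> /=]; case: p => // x s.
by apply: sub_path => -[a|a] [b|b] //=; apply: (subsetP sub).
Qed.

Lemma is_path_consV E u w s :
  is_path E (inl u :: s) -> (u, w) \in E -> inr w \notin s ->
  is_path E [:: inr w, inl u & s].
Proof.
case/and3P=> _ /= /andP[u_s uniq_s] path_s uw w_s.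
by rewrite /is_path /= inE u_s w_s uw uniq_s.
Qed.

Lemma is_path_consU E w v s :
  is_path E (inr v :: s) -> (w, v) \in E -> inl w \notin s ->
  is_path E [:: inl w, inr v & s].
Proof.
case/and3P=> _ /= /andP[v_s uniq_s] path_s wv w_s.
by rewrite /is_path /= inE v_s w_s wv uniq_s.
Qed.

Definition forward_bounded E k :=
  forall p, is_path E p -> forward p -> plength p <= k.

Lemma forward_bounded0 E : forward_bounded E 0 -> E = set0.
Proof.
move=> bounded; apply/setP => -[u v]; rewrite inE; apply/negP => uv.
by have := bounded [:: inl u; inr v]; rewrite /is_path /forward /= uv => /(_ isT isT).
Qed.

End Paths.

(* The two orientations of a forward path are handled at once, [d] being
   either [ltn] or its converse. *)
Section Direction.
Variables (m n : nat) (d : rel nat).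
Hypotheses (d_trans : transitive d) (d_irr : irreflexive d)
           (d_total : forall a b, a != b -> d a b || d b a).
Implicit Types (E : {set 'I_m * 'I_n}) (p : seq ('I_m + 'I_n)).

Definition monotone_path p :=
  sorted (fun a b : 'I_m => d a b) (Uverts p) &&
  sorted (fun a b : 'I_n => d a b) (Vverts p).

Definition first_edges E : {set 'I_m * 'I_n} :=
  fiber_minima E fst (fun e' e => d e'.2 e.2) :|:
  fiber_minima E snd (fun e' e => d e'.1 e.1).

Lemma card_first_edges E : #|first_edges E| <= m + n.
Proof.
rewrite (leq_trans (leq_card_setU _ _)) // leq_add //.
- rewrite -[X in _ <= X]card_ord; apply: card_fiber_minima => -[u v] [u' v'] _ _ /= <-.
  by rewrite xpair_eqE eqxx /= => /d_total.
- rewrite -[X in _ <= X]card_ord; apply: card_fiber_minima => -[u v] [u' v'] _ _ /= <-.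
  by rewrite xpair_eqE eqxx andbT => /d_total.
Qed.

Lemma sorted_cons_notin (T : nat) (w : 'I_T) s :
  sorted (fun a b : 'I_T => d a b) (w :: s) -> w \notin s.
Proof.
have dT_trans : transitive (fun a b : 'I_T => d a b) by move=> ? ? ?; apply: d_trans.
have dT_irr : irreflexive (fun a b : 'I_T => d a b) by move=> ?; apply: d_irr.
by move=> /(sorted_uniq dT_trans dT_irr) /andP[].
Qed.

Lemma monotone_path_extend E p :
  is_path (E :\: first_edges E) p -> monotone_path p ->
  exists x, is_path E (x :: p) && monotone_path (x :: p).
Proof.
move=> p_path mono; have p_pathE := is_path_subset (subsetDl E _) p_path.
case: p p_path mono p_pathE => [|x [|y s]]; rewrite {1}/is_path //=.
move=> /andP[_ /andP[adj _]] /andP[sortedU sortedV].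
case: x y adj sortedU sortedV => [u|v] [u'|v'] // adj sortedU sortedV p_pathE.
- move: adj; rewrite /= in_setD in_setU => /andP[/norP[not_first _] uv'].
  have [[u0 w] uw /andP[/eqP /= eq_u dwv']] := fiber_minimaPn uv' not_first.
  subst u0.
  have sortedV' : sorted (fun a b : 'I_n => d a b) (w :: Vverts [:: inl u, inr v' & s]).
    by rewrite /= dwv'.
  have w_notin : inr w \notin inr v' :: s.
    by rewrite -mem_Vverts; apply: sorted_cons_notin sortedV'.
  by exists (inr w); rewrite is_path_consV //=; apply/andP.
- move: adj; rewrite /= in_setD in_setU => /andP[/norP[_ not_first] u'v].
  have [[w v0] wv /andP[/eqP /= eq_v dwu']] := fiber_minimaPn u'v not_first.
  subst v0.
  have sortedU' : sorted (fun a b : 'I_m => d a b) (w :: Uverts [:: inr v, inl u' & s]).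
    by rewrite /= dwu'.
  have w_notin : inl w \notin inl u' :: s.
    by rewrite -mem_Uverts; apply: sorted_cons_notin sortedU'.
  by exists (inl w); rewrite is_path_consU //=; apply/andP.
Qed.

End Direction.

Lemma gtn_trans : transitive gtn.
Proof. by move=> y x z /= yx zy; apply: ltn_trans zy yx. Qed.

Lemma ltn_total a b : a != b -> (a < b) || (b < a).
Proof. by rewrite neq_ltn. Qed.

Lemma gtn_total a b : a != b -> gtn a b || gtn b a.
Proof. by rewrite neq_ltn orbC. Qed.

Section Trim.
Variables m n : nat.
Implicit Types (E : {set 'I_m * 'I_n}) (p : seq ('I_m + 'I_n)).

Definition trim E := E :\: (first_edges ltn E :|: first_edges gtn E).

Lemma card_trim E : #|E| <= #|trim E| + 2 * (m + n).
Proof.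
rewrite -(cardsID (first_edges ltn E :|: first_edges gtn E) E) addnC leq_add2l.
rewrite (leq_trans (subset_leq_card (subsetIr _ _))) // (leq_trans (leq_card_setU _ _)) //.
rewrite mul2n -addnn leq_add //.
  exact: card_first_edges ltn_total E.
exact: card_first_edges gtn_total E.
Qed.

Lemma forward_bounded_trim E k :
  forward_bounded E k.+1 -> forward_bounded (trim E) k.
Proof.
move=> bounded p p_path p_forward.
have size_p : 1 < size p by case/and3P: p_path.
suff [x /andP[x_path x_forward]] : exists x, is_path E (x :: p) && forward (x :: p).
  by have := bounded _ x_path x_forward; rewrite /plength /=; case: (size p) size_p.
case/orP: p_forward => mono.
- have [x /andP[x_path x_mono]] := monotone_path_extend (d := ltn) (@ltn_trans) ltnn
    (is_path_subset (setDS _ (subsetUl _ _)) p_path) mono.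
  by exists x; rewrite x_path; apply/orP; left.
- have [x /andP[x_path x_mono]] := monotone_path_extend gtn_trans ltnn
    (is_path_subset (setDS _ (subsetUr _ _)) p_path) mono.
  by exists x; rewrite x_path; apply/orP; right.
Qed.

Lemma card_forward_bounded E k : forward_bounded E k -> #|E| <= 2 * k * (m + n).
Proof.
elim: k E => [|k IHk] E bounded.
  by rewrite (forward_bounded0 bounded) cards0.
have := IHk _ (forward_bounded_trim bounded); have := card_trim E; lia.
Qed.

End Trim.

Theorem lemma8 :
  exists C : nat, forall (m n : nat) (E : {set 'I_m * 'I_n}) (k : nat),
    PRBG E ->
    (forall p : seq ('I_m + 'I_n), is_path E p -> forward p -> plength p <= k) ->
    #|E| <= C * k * (m + n).
Proof. by exists 2 => m n E k _; apply: card_forward_bounded. Qed.
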